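(* For every $\tau\in[0,\tfrac1{3\sqrt3}]$ the function $t\mapsto e^{2t}y_\tau(t)$ is increasing on $[0,p_\tau]$; consequently $y_\tau(t)\ge\tfrac23e^{-2t}$ on $[0,p_\tau]$, and $|\dot y_\tau|<2y_\tau$ there.
   Context: $y_\tau$ solves $\ddot y=-2y(3y-2)$, $y(0)=y_{\max}$, $\dot y(0)=0$, with $y_{\max}$ the largest root of $y^3-y^2+4\tau^2$ (so $y_{\max}\ge\tfrac23$); $p_\tau$ is its half-period (the first positive time where $y_\tau$ attains its minimum; for $\tau=0$, $y_0=\operatorname{sech}^2t$ and $p_0=\infty$). *)

From Stdlib Require Import Reals.
From Coquelicot Require Import Coquelicot.
Open Scope R_scope.

Definition is_largest_root (tau ymax : R) : Prop :=
  ymax ^ 3 - ymax ^ 2 + 4 * tau ^ 2 = 0 /\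
  (forall r : R, r ^ 3 - r ^ 2 + 4 * tau ^ 2 = 0 -> r <= ymax).

Definition solves_ivp (tau : R) (y dy : R -> R) : Prop :=
  (forall t : R, is_derive y t (dy t)) /\
  (forall t : R, is_derive dy t (-2 * y t * (3 * y t - 2))) /\
  (exists ymax : R, is_largest_root tau ymax /\ y 0 = ymax) /\
  dy 0 = 0.

Definition attains_min_at (y : R -> R) (s : R) : Prop :=
  forall u : R, y s <= y u.

(* t lies in [0, p_tau], where p_tau is the first positive time at which y
   attains its minimum; if no such time exists (tau = 0), this is [0, +oo). *)
Definition in_half_period (y : R -> R) (t : R) : Prop :=
  0 <= t /\ (forall s : R, 0 < s < t -> ~ attains_min_at y s).

From Stdlib Require Import Reals Lra Psatz.
From Coquelicot Require Import Coquelicot.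
Open Scope R_scope.

(* Multiplying the equation by [dy] gives the conserved energy
   [dy^2 = 4 y^2 (1 - y) - 16 tau^2].  This forbids [y] from reaching [0] in
   forward time (a Gronwall-type argument on [e^(6t) y^2 / (1 + y^2)]), and
   once [y > 0] it gives [dy^2 < 4 y^2], i.e. [|dy| < 2 y].  The latter is
   exactly the positivity of [(e^(2t) y)' = e^(2t) (2 y + dy)].  Finally
   [tau <= 1/(3 sqrt 3)] puts a root of the cubic in [[2/3, 2]], so
   [y(0) = y_max >= 2/3].  All of this holds on the whole of [[0, +oo)]; the
   only property of the half period that is used is [t >= 0]. *)

Lemma nondecreasing_of_derive_nonneg (f df : R -> R) (a b : R) :
  (forall t, is_derive f t (df t)) -> a <= b ->
  (forall c, a < c < b -> 0 <= df c) -> f a <= f b.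
Proof.
  intros f_derive a_le_b df_ge0.
  destruct (Req_dec a b) as [<- | a_neq_b]; [lra |].
  destruct (MVT_cor2 f df a b) as [c [f_incr c_in]]; [lra | |].
  - intros c _. apply is_derive_Reals, f_derive.
  - assert (0 <= df c) by (apply df_ge0; lra). nra.
Qed.

Lemma continuity_of_is_derive (f df : R -> R) :
  (forall t, is_derive f t (df t)) -> continuity f.
Proof.
  intros f_derive t. apply derivable_continuous_pt.
  exists (df t). apply is_derive_Reals, f_derive.
Qed.

Lemma sq_le_of_le_inv_3_sqrt3 (tau : R) :
  0 <= tau <= 1 / (3 * sqrt 3) -> 27 * tau ^ 2 <= 1.
Proof.
  intros [tau_ge0 tau_le].
  assert (sqrt3_sq : sqrt 3 * sqrt 3 = 3) by (apply sqrt_sqrt; lra).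
  assert (sqrt3_pos : 0 < sqrt 3) by (apply sqrt_lt_R0; lra).
  assert (tau * (3 * sqrt 3) <= 1).
  { apply Rmult_le_compat_r with (r := 3 * sqrt 3) in tau_le; [| lra].
    replace (1 / (3 * sqrt 3) * (3 * sqrt 3)) with 1 in tau_le by (field; lra).
    lra. }
  nra.
Qed.

Lemma largest_root_ge_2_3 (tau ymax : R) :
  27 * tau ^ 2 <= 1 -> is_largest_root tau ymax -> 2 / 3 <= ymax.
Proof.
  intros tau_small [_ ymax_largest].
  set (p := fun r : R => r ^ 3 - r ^ 2 + 4 * tau ^ 2).
  assert (p_cont : continuity p) by (intro r; unfold p; reg).
  destruct (IVT_gen p (2 / 3) 2 0 p_cont) as [r [r_in p_r]].
  - unfold p. rewrite Rmin_left, Rmax_right; [split; nra | nra | nra].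
  - rewrite Rmin_left, Rmax_right in r_in by lra.
    assert (r <= ymax) by (apply ymax_largest, p_r). lra.
Qed.

(* This is the inequality making [e^(6t) y^2 / (1 + y^2)] nondecreasing. *)
Lemma energy_bound_weight (u d : R) :
  d ^ 2 <= 4 * u ^ 2 * (1 - u) -> 0 <= 3 * u ^ 2 * (1 + u ^ 2) + u * d.
Proof.
  intros d_bound.
  assert ((u * d) ^ 2 <= (3 * u ^ 2 * (1 + u ^ 2)) ^ 2).
  { replace ((u * d) ^ 2) with (u ^ 2 * d ^ 2) by ring.
    assert (0 <= u ^ 2) by nra.
    assert (4 * (1 - u) <= 9 * (1 + u ^ 2) ^ 2) by nra.
    nra. }
  assert (0 <= 3 * u ^ 2 * (1 + u ^ 2)) by nra.
  nra.
Qed.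

Section Trajectory.

Variables y dy : R -> R.
Hypothesis y_derive : forall t, is_derive y t (dy t).

Lemma Derive_trajectory (t : R) : Derive (fun x => y x) t = dy t.
Proof. exact (is_derive_unique _ _ _ (y_derive t)). Qed.

Lemma energy_conservation :
  (forall t, is_derive dy t (-2 * y t * (3 * y t - 2))) ->
  forall s t, dy s ^ 2 - 4 * y s ^ 2 + 4 * y s ^ 3 = dy t ^ 2 - 4 * y t ^ 2 + 4 * y t ^ 3.
Proof.
  intros dy_derive s t.
  assert (energy_const : forall a b, a < b ->
    dy a ^ 2 - 4 * y a ^ 2 + 4 * y a ^ 3 = dy b ^ 2 - 4 * y b ^ 2 + 4 * y b ^ 3).
  { intros a b a_lt_b. apply (eq_is_derive (fun u => dy u ^ 2 - 4 * y u ^ 2 + 4 * y u ^ 3));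
      [| exact a_lt_b].
    intros u _. auto_derive.
    - repeat split; eexists; eauto.
    - rewrite Derive_trajectory, (is_derive_unique (fun x : R => dy x) _ _ (dy_derive u)).
      unfold zero; simpl. ring. }
  destruct (Rtotal_order s t) as [| [-> |]]; [auto | reflexivity | symmetry; auto].
Qed.

Lemma positive_forward :
  (forall t, dy t ^ 2 <= 4 * y t ^ 2 * (1 - y t)) -> 0 < y 0 ->
  forall t, 0 <= t -> 0 < y t.
Proof.
  intros energy_bound y0_pos.
  set (G := fun t => exp (6 * t) * (y t ^ 2 / (1 + y t ^ 2))).
  set (dG := fun t => exp (6 * t) * (2 * (3 * y t ^ 2 * (1 + y t ^ 2) + y t * dy t)
                                     / (1 + y t ^ 2) ^ 2)).
  assert (G_derive : forall t, is_derive G t (dG t)).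
  { intro t. assert (0 < 1 + y t ^ 2) by nra. unfold G, dG. auto_derive.
    - repeat split; [eexists; eauto | eexists; eauto | lra].
    - rewrite Derive_trajectory. field. lra. }
  assert (G_nonvanishing : forall t, 0 <= t -> y t <> 0).
  { intros t t_ge0 yt_zero.
    assert (G 0 <= G t).
    { apply (nondecreasing_of_derive_nonneg G dG); [exact G_derive | exact t_ge0 |].
      intros c _. assert (0 < 1 + y c ^ 2) by nra.
      assert (0 <= 3 * y c ^ 2 * (1 + y c ^ 2) + y c * dy c)
        by apply energy_bound_weight, energy_bound.
      unfold dG. apply Rmult_le_pos; [apply Rlt_le, exp_pos |].
      apply Rdiv_le_0_compat; [lra | apply pow_lt; lra]. }
    assert (0 < G 0).
    { unfold G. rewrite Rmult_0_r, exp_0, Rmult_1_l.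
      apply Rdiv_lt_0_compat; nra. }
    assert (G t = 0) by (unfold G; rewrite yt_zero; field; lra).
    lra. }
  intros t t_ge0. destruct (Rlt_le_dec 0 (y t)) as [| yt_le0]; [assumption | exfalso].
  destruct (IVT_gen y 0 t 0 (continuity_of_is_derive y dy y_derive)) as [x [x_in yx_zero]].
  - split; [apply Rle_trans with (y t); [apply Rmin_r | lra] |
            apply Rle_trans with (y 0); [lra | apply Rmax_l]].
  - rewrite Rmin_left, Rmax_right in x_in by lra.
    exact (G_nonvanishing x (proj1 x_in) yx_zero).
Qed.

Lemma exp_mul_increasing :
  (forall t, 0 <= t -> Rabs (dy t) < 2 * y t) ->
  forall s t, 0 <= s -> s < t -> exp (2 * s) * y s < exp (2 * t) * y t.
Proof.
  intros dy_small s t s_ge0 s_lt_t.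
  apply (incr_function_le (fun u => exp (2 * u) * y u) 0 p_infty
           (fun u => exp (2 * u) * (2 * y u + dy u))); try easy.
  - intros u _ _. auto_derive; [eexists; eauto |].
    rewrite Derive_trajectory. ring.
  - intros u u_ge0 _. apply Rmult_lt_0_compat; [apply exp_pos |].
    assert (Rabs (dy u) < 2 * y u) by (apply dy_small, u_ge0).
    assert (- dy u <= Rabs (dy u)) by (rewrite <- Rabs_Ropp; apply Rle_abs).
    lra.
Qed.

End Trajectory.

Theorem mainTheorem9 (tau : R) (y dy : R -> R) :
  0 <= tau <= 1 / (3 * sqrt 3) ->
  solves_ivp tau y dy ->
  (forall s t : R, in_half_period y s -> in_half_period y t -> s < t ->
     exp (2 * s) * y s < exp (2 * t) * y t) /\
  (forall t : R, in_half_period y t -> 2 / 3 * exp (-2 * t) <= y t) /\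
  (forall t : R, in_half_period y t -> Rabs (dy t) < 2 * y t).
Proof.
  intros tau_range [y_derive [dy_derive [[ymax [ymax_root y0]] dy0]]].
  assert (ymax_ge : 2 / 3 <= ymax)
    by exact (largest_root_ge_2_3 tau ymax (sq_le_of_le_inv_3_sqrt3 tau tau_range) ymax_root).
  assert (energy : forall t, dy t ^ 2 = 4 * y t ^ 2 * (1 - y t) - 16 * tau ^ 2).
  { intro t. destruct ymax_root as [ymax_cubic _].
    pose proof (energy_conservation y dy y_derive dy_derive t 0). rewrite dy0, y0 in *. nra. }
  assert (y_pos : forall t, 0 <= t -> 0 < y t).
  { apply (positive_forward y dy y_derive); [intro t; rewrite energy; nra | lra]. }
  assert (dy_small : forall t, 0 <= t -> Rabs (dy t) < 2 * y t).
  { intros t t_ge0. specialize (y_pos t t_ge0).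
    rewrite <- (Rabs_pos_eq (2 * y t)) by lra. apply Rsqr_lt_abs_0.
    unfold Rsqr. pose proof (energy t). assert (0 < y t ^ 3) by (apply pow_lt; lra). nra. }
  pose proof (exp_mul_increasing y dy y_derive dy_small) as increasing.
  split; [| split].
  - intros s t [s_ge0 _] _. exact (increasing s t s_ge0).
  - intros t [t_ge0 _].
    assert (ymax <= exp (2 * t) * y t).
    { destruct (Req_dec t 0) as [-> | t_neq0]; [rewrite Rmult_0_r, exp_0, y0; lra |].
      pose proof (increasing 0 t (Rle_refl 0) ltac:(lra)).
      rewrite Rmult_0_r, exp_0, y0 in *. lra. }
    assert (exp (-2 * t) * exp (2 * t) = 1)
      by (rewrite <- exp_plus, <- exp_0; f_equal; ring).
    pose proof (exp_pos (-2 * t)). nra.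
  - intros t [t_ge0 _]. exact (dy_small t t_ge0).
Qed.
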